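(* Let $G=H\langle a\rangle$ be a group, where $H$ is a normal abelian subgroup of $G$. Then $a$ is an almost right Engel element of $G$ if and only if it is an almost left Engel element of $G$. In that case $\mathcal L(a)=\mathcal R(a)$.
   Context: Commutators: $[x,y]=x^{-1}y^{-1}xy$, left-normed, and $[x,{}_n\,y]=[x,y,\dots,y]$ with $y$ repeated $n$ times. A right Engel sink of $g\in G$ is a set $S$ such that for every $x\in G$ one has $[g,{}_n\,x]\in S$ for all sufficiently large $n$; a left Engel sink of $g$ is a set $S$ such that for every $x\in G$ one has $[x,{}_n\,g]\in S$ for all sufficiently large $n$. The element $g$ is almost right (resp. left) Engel if it has a finite right (resp. left) Engel sink; in that case $\mathcal R(g)$ (resp. $\mathcal L(g)$) denotes the minimal such finite sink. *)

(* abstract (possibly infinite) groups via mathcomp's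
   boot/monoid.v [groupType]; commutator [~ x, y] = x^-1 * (y^-1 * (x * y)). *)
From mathcomp Require Import all_boot.

Set Implicit Arguments.
Unset Strict Implicit.
Unset Printing Implicit Defensive.

Local Open Scope group_scope.

Section Engel.
Variable G : groupType.

Fixpoint engel_comm (x y : G) (n : nat) : G :=
  match n with
  | 0 => x
  | n'.+1 => [~ engel_comm x y n', y]
  end.

Definition finite_set (S : G -> Prop) : Prop :=
  exists l : seq G, forall z, S z -> z \in l.

Definition right_engel_sink (g : G) (S : G -> Prop) : Prop :=
  forall x : G, exists N : nat, forall n, (N <= n)%N -> S (engel_comm g x n).

Definition left_engel_sink (g : G) (S : G -> Prop) : Prop :=
  forall x : G, exists N : nat, forall n, (N <= n)%N -> S (engel_comm x g n).

Definition almost_right_engel (g : G) : Prop :=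
  exists S, finite_set S /\ right_engel_sink g S.

Definition almost_left_engel (g : G) : Prop :=
  exists S, finite_set S /\ left_engel_sink g S.

Definition is_min_right_sink (g : G) (S : G -> Prop) : Prop :=
  [/\ finite_set S, right_engel_sink g S &
      forall S', finite_set S' -> right_engel_sink g S' -> forall z, S z -> S' z].

Definition is_min_left_sink (g : G) (S : G -> Prop) : Prop :=
  [/\ finite_set S, left_engel_sink g S &
      forall S', finite_set S' -> left_engel_sink g S' -> forall z, S z -> S' z].

End Engel.

(* Put phi u = [u, a].  Every [g, a] lies in H, and on the abelian normal
   subgroup H the map phi is an endomorphism commuting with conjugation by a;
   left Engel sequences [x, _n a] are phi-orbits.  Periodic points of phi thus
   lie in every left Engel sink, and a finite left sink makes every orbit
   eventually periodic.  Writing g = h a^k, the commutator [u, g] = [u, a^k] is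
   built from [u, a] by products, inverses and conjugation by a, so if
   phi^(n+1) u is periodic then so is phi^n [u, g]; starting from [a, x] in H,
   this makes the periodic points a right Engel sink.  Conversely, if
   [x, a] = [w, a] with w in H, then a w^-1 acts on H as a does and
   [a, a w^-1] = [w, a], so [a, _(n+1) (a w^-1)] = [x, _(n+1) a]: right Engel
   sinks are left Engel sinks.  Hence the periodic points of phi form both
   R(a) and L(a). *)

From mathcomp Require Import all_boot.

Set Implicit Arguments.
Unset Strict Implicit.
Unset Printing Implicit Defensive.

Local Open Scope group_scope.

Lemma iter_eventually_periodic (T : eqType) (f : T -> T) (s : seq T) x N :
  (forall n, (N <= n)%N -> iter n f x \in s) ->
  exists k, exists2 m, (0 < m)%N & iter m f (iter k f x) = iter k f x.
Proof.
move=> orbit_s; set y := iter N f x.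
have traject_s : {subset traject f y (size s).+1 <= s}.
  by move=> _ /trajectP[i _ ->]; rewrite /y -iterD orbit_s ?leq_addl.
have /trajectP[i lt_i_s loop_i] : looping f y (size s).
  apply/negPn; rewrite -looping_uniq; apply/negP => uniq_y.
  by have := uniq_leq_size uniq_y traject_s; rewrite size_traject ltnn.
exists (i + N)%N, (size s - i)%N; first by rewrite subn_gt0.
by rewrite iterD -iterD subnK ?(ltnW lt_i_s).
Qed.

Section EngelCommutators.
Variable G : groupType.
Implicit Types (x y z u c : G) (S : G -> Prop).

Lemma commMgJ x y z : [~ x * y, z] = [~ x, z] ^ y * [~ y, z].
Proof. by rewrite !commgEl !conjgE !invgM !mulgA !mulgK. Qed.

Lemma commgMJ x y z : [~ x, y * z] = [~ x, z] * [~ x, y] ^ z.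
Proof. by rewrite !commgEl !conjgE !invgM !mulgA !mulgK. Qed.

Lemma commgVr x y : [~ x, y^-1] = ([~ x, y] ^ y^-1)^-1.
Proof. by rewrite !commgEl !conjgE !invgM !invgK !mulgA mulgV mul1g. Qed.

Lemma commMg_commute c x y : commute c y -> [~ c * x, y] = [~ x, y].
Proof. by move=> /commgP/eqP cy; rewrite commMgJ cy conj1g mul1g. Qed.

Lemma commute_expg_l x n : commute (x ^+ n) x.
Proof. exact/commute_sym/commuteX/commute_refl. Qed.

Lemma commute_expgV_l x n : commute (x ^- n) x.
Proof. exact/commute_sym/commuteV/commute_sym/commute_expg_l. Qed.

Lemma engel_commE x y n : engel_comm x y n = iter n (commg^~ y) x.
Proof. by elim: n => //= n ->. Qed.

Lemma engel_commD x y m n :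
  engel_comm x y (m + n) = engel_comm (engel_comm x y m) y n.
Proof. by rewrite !engel_commE addnC iterD. Qed.

Lemma engel_commS x y n : engel_comm x y n.+1 = engel_comm [~ x, y] y n.
Proof. by rewrite -add1n engel_commD. Qed.

Lemma engel_comm1 y n : engel_comm 1 y n = 1.
Proof. by elim: n => //= n ->; rewrite comm1g. Qed.

Lemma engel_commJ u y c n :
  commute c y -> engel_comm (u ^ c) y n = engel_comm u y n ^ c.
Proof.
move=> cy; elim: n => //= n ->.
by rewrite conjRg; congr [~ _, _]; rewrite conjgE -cy mulKg.
Qed.

Definition engel_periodic y z : Prop :=
  exists2 m, (0 < m)%N & engel_comm z y m = z.

Lemma engel_comm_period y z m j :
  engel_comm z y m = z -> engel_comm z y (m * j) = z.
Proof. by rewrite !engel_commE mulnC iterM; apply: iter_fix. Qed.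

Lemma engel_periodic1 y : engel_periodic y 1.
Proof. by exists 1%N; rewrite //= comm1g. Qed.

Lemma engel_periodic_comm y z :
  engel_periodic y z -> engel_periodic y [~ z, y].
Proof. by case=> m m_gt0 zm; exists m; rewrite // -engel_commS /= zm. Qed.

Lemma engel_periodicJ y z c :
  commute c y -> engel_periodic y z -> engel_periodic y (z ^ c).
Proof. by move=> cy [m m_gt0 zm]; exists m; rewrite // engel_commJ // zm. Qed.

Lemma engel_periodic_engel_comm y z n :
  engel_periodic y z -> engel_periodic y (engel_comm z y n).
Proof. by move=> zP; elim: n => //= n; apply: engel_periodic_comm. Qed.

Lemma left_engel_sink_periodic y S :
  left_engel_sink y S -> forall z, engel_periodic y z -> S z.
Proof.
move=> sinkS z [m m_gt0 zm]; have [N SN] := sinkS z.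
by rewrite -(engel_comm_period N zm); apply: SN; rewrite leq_pmull.
Qed.

Lemma finite_left_sink_eventually_periodic y S :
  finite_set S -> left_engel_sink y S ->
  forall x, exists N, engel_periodic y (engel_comm x y N).
Proof.
move=> [s Ss] sinkS x; have [N SN] := sinkS x.
have [|k [m m_gt0 km]] := @iter_eventually_periodic _ (commg^~ y) s x N.
  by move=> n /SN /Ss; rewrite engel_commE.
by exists k; exists m; rewrite // !engel_commE.
Qed.

Lemma finite_setS S S' :
  (forall z, S z -> S' z) -> finite_set S' -> finite_set S.
Proof. by move=> sSS' [s S's]; exists s => z /sSS'/S's. Qed.

Lemma right_engel_sinkS g S S' :
  (forall z, S z -> S' z) -> right_engel_sink g S -> right_engel_sink g S'.
Proof.
by move=> sSS' sinkS x; have [N SN] := sinkS x; exists N => n /SN/sSS'.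
Qed.

End EngelCommutators.

Section NormalAbelianByCyclic.
Variables (G : groupType) (H : G -> Prop) (a : G).
Hypothesis H1 : H 1.
Hypothesis HM : forall x y, H x -> H y -> H (x * y).
Hypothesis HV : forall x, H x -> H x^-1.
Hypothesis Hnormal : forall h g, H h -> H (h ^ g).
Hypothesis Habelian : forall x y, H x -> H y -> x * y = y * x.
Hypothesis HG : forall g : G, exists h, exists n : nat,
  H h /\ (g = h * a ^+ n \/ g = h * a ^- n).

Lemma commgH u g : H u -> H [~ u, g].
Proof.
by move=> Hu; rewrite commgEl; apply: HM; [apply: HV | apply: Hnormal].
Qed.

Lemma engel_commH u g n : H u -> H (engel_comm u g n).
Proof. by move=> Hu; elim: n => //= n; apply: commgH. Qed.

Lemma conjg_fixH u w : H u -> H w -> u ^ w = u.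
Proof. by move=> Hu Hw; rewrite conjgE (Habelian Hu Hw) mulKg. Qed.

Lemma commg_fixH u w : H u -> H w -> [~ u, w] = 1.
Proof. by move=> Hu Hw; rewrite commgEl conjg_fixH ?mulVg. Qed.

Lemma commg_a_decomp g : exists2 w, H w & [~ g, a] = [~ w, a].
Proof.
have [h [n [Hh [-> | ->]]]] := HG g.
- exists (h ^ a ^+ n); first exact: Hnormal.
  by rewrite conjgC commMg_commute //; apply: commute_expg_l.
- exists (h ^ a ^- n); first exact: Hnormal.
  by rewrite conjgC commMg_commute //; apply: commute_expgV_l.
Qed.

Lemma commg_aH g : H [~ g, a].
Proof. by have [w Hw ->] := commg_a_decomp g; apply: commgH. Qed.

Lemma commMgH u w : H u -> H w -> [~ u * w, a] = [~ u, a] * [~ w, a].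
Proof. by move=> Hu Hw; rewrite commMgJ conjg_fixH //; apply: commgH. Qed.

Lemma engel_commMH u w n : H u -> H w ->
  engel_comm (u * w) a n = engel_comm u a n * engel_comm w a n.
Proof.
by move=> Hu Hw; elim: n => //= n ->; rewrite commMgH //; apply: engel_commH.
Qed.

Lemma engel_commVH u n : H u -> engel_comm u^-1 a n = (engel_comm u a n)^-1.
Proof.
move=> Hu; apply/esym/mulg1_eq.
by rewrite -engel_commMH ?mulgV ?engel_comm1 //; apply: HV.
Qed.

Lemma engel_periodicH z : engel_periodic a z -> H z.
Proof. by case=> -[|m] // _ <-; apply: commg_aH. Qed.

Lemma engel_periodicM u w :
  engel_periodic a u -> engel_periodic a w -> engel_periodic a (u * w).
Proof.
move=> uP wP; have Hu := engel_periodicH uP; have Hw := engel_periodicH wP.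
case: uP wP => m m_gt0 um [k k_gt0 wk].
exists (m * k)%N; first by rewrite muln_gt0 m_gt0.
by rewrite engel_commMH // engel_comm_period // mulnC engel_comm_period.
Qed.

Lemma engel_periodicV u : engel_periodic a u -> engel_periodic a u^-1.
Proof.
move=> uP; have Hu := engel_periodicH uP.
by case: uP => m m_gt0 um; exists m; rewrite // engel_commVH // um.
Qed.

Definition preperiodic n w := H w /\ engel_periodic a (engel_comm w a n).

Lemma preperiodic1 n : preperiodic n 1.
Proof. by split; rewrite // engel_comm1; apply: engel_periodic1. Qed.

Lemma preperiodicM n u w :
  preperiodic n u -> preperiodic n w -> preperiodic n (u * w).
Proof.
case=> Hu uP [Hw wP]; split; first exact: HM.
by rewrite engel_commMH //; apply: engel_periodicM.
Qed.

Lemma preperiodicV n u : preperiodic n u -> preperiodic n u^-1.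
Proof.
case=> Hu uP; split; first exact: HV.
by rewrite engel_commVH //; apply: engel_periodicV.
Qed.

Lemma preperiodicJ n u c :
  commute c a -> preperiodic n u -> preperiodic n (u ^ c).
Proof.
move=> ca [Hu uP]; split; first exact: Hnormal.
by rewrite engel_commJ //; apply: engel_periodicJ.
Qed.

Lemma preperiodicW m n w : (m <= n)%N -> preperiodic m w -> preperiodic n w.
Proof.
move=> le_mn [Hw wP]; split=> //.
by rewrite -(subnKC le_mn) engel_commD; apply: engel_periodic_engel_comm.
Qed.

Lemma preperiodic_comm_a n u : preperiodic n.+1 u -> preperiodic n [~ u, a].
Proof. by case=> Hu uP; split; [apply: commgH | rewrite -engel_commS]. Qed.

Lemma preperiodic_commX n u k :
  preperiodic n.+1 u -> preperiodic n [~ u, a ^+ k].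
Proof.
move=> uP; elim: k => [|k IHk]; first by rewrite commg1; apply: preperiodic1.
rewrite expgSr commgMJ; apply: preperiodicM; first exact: preperiodic_comm_a.
exact/preperiodicJ/IHk/commute_refl.
Qed.

Lemma preperiodic_commXV n u k :
  preperiodic n.+1 u -> preperiodic n [~ u, a ^- k].
Proof.
move=> uP; rewrite commgVr; apply/preperiodicV/preperiodicJ.
  exact: commute_expgV_l.
exact: preperiodic_commX.
Qed.

Lemma preperiodic_comm n u g : preperiodic n.+1 u -> preperiodic n [~ u, g].
Proof.
move=> uP; have [Hu _] := uP; have [h [k [Hh defg]]] := HG g.
have split_comm c : [~ u, h * c] = [~ u, c].
  by rewrite commgMJ (commg_fixH Hu Hh) conj1g mulg1.
case: defg => ->; rewrite split_comm.
  exact: preperiodic_commX.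
exact: preperiodic_commXV.
Qed.

Lemma preperiodic_engel_comm j n u g :
  preperiodic (j + n) u -> preperiodic n (engel_comm u g j).
Proof.
elim: j u => [|j IHj] u uP //.
by rewrite engel_commS; apply/IHj/preperiodic_comm.
Qed.

Lemma eventually_periodic_right_sink :
  (forall x, exists N, engel_periodic a (engel_comm x a N)) ->
  right_engel_sink a (engel_periodic a).
Proof.
move=> ev_periodic x.
have Hax : H [~ a, x] by rewrite -invgR; apply/HV/commg_aH.
have [N axP] := ev_periodic [~ a, x].
exists N.+1 => -[|n] // le_Nn; rewrite engel_commS.
have ax_n : preperiodic (n + 0) [~ a, x].
  by rewrite addn0; apply: (preperiodicW (m := N)).
by case: (preperiodic_engel_comm x ax_n).
Qed.

Lemma commg_a_mulH u w : H u -> H w -> [~ u, a * w] = [~ u, a].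
Proof.
move=> Hu Hw; rewrite commgMJ (commg_fixH Hu Hw) mul1g.
by rewrite conjg_fixH //; apply: commg_aH.
Qed.

Lemma engel_comm_a_mulH u w n : H u -> H w ->
  engel_comm u (a * w) n = engel_comm u a n.
Proof.
move=> Hu Hw; elim: n => //= n ->.
by rewrite commg_a_mulH //; apply: engel_commH.
Qed.

Lemma commg_a_mulV w : H w -> [~ a, a * w^-1] = [~ w, a].
Proof.
move=> Hw; rewrite commgMJ commgg conj1g mulg1 -invgR.
by rewrite -[[~ w^-1, a]]/(engel_comm w^-1 a 1) engel_commVH ?invgK.
Qed.

Lemma right_sink_left_sink S : right_engel_sink a S -> left_engel_sink a S.
Proof.
move=> sinkS x; have [w Hw xw] := commg_a_decomp x.
have [N SN] := sinkS (a * w^-1).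
exists N.+1 => -[|n] // le_Nn; have := SN n.+1 (ltnW le_Nn).
rewrite !engel_commS commg_a_mulV // engel_comm_a_mulH ?xw //.
  exact: commg_aH.
exact: HV.
Qed.

End NormalAbelianByCyclic.

Theorem lemma3p1 (G : groupType) (H : G -> Prop) (a : G)
  (H1 : H 1)
  (HM : forall x y, H x -> H y -> H (x * y))
  (HV : forall x, H x -> H x^-1)
  (Hnormal : forall h g, H h -> H (h ^ g))
  (Habelian : forall x y, H x -> H y -> x * y = y * x)
  (HG : forall g : G, exists h, exists n : nat,
          H h /\ (g = h * a ^+ n \/ g = h * a ^- n)) :
  (almost_right_engel a <-> almost_left_engel a) /\
  (almost_right_engel a ->
     forall S : G -> Prop, is_min_left_sink a S <-> is_min_right_sink a S).
Proof.
have right_left := right_sink_left_sink HM HV Hnormal Habelian HG.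
have periodic_right : almost_left_engel a ->
    finite_set (engel_periodic a) /\ right_engel_sink a (engel_periodic a).
  case=> S [finS sinkS]; split.
    exact: (finite_setS (left_engel_sink_periodic sinkS) finS).
  apply: (eventually_periodic_right_sink H1 HM HV Hnormal Habelian HG).
  exact: finite_left_sink_eventually_periodic finS sinkS.
have almost_right_left : almost_right_engel a -> almost_left_engel a.
  by case=> S [finS sinkS]; exists S; split; last exact: right_left.
split.
  by split=> // /periodic_right[finP sinkP]; exists (engel_periodic a).
move=> /almost_right_left /periodic_right[finP sinkP] S; split.
- case=> finS sinkS minS; split=> //.
    exact: right_engel_sinkS (left_engel_sink_periodic sinkS) sinkP.
  by move=> S' finS' /right_left; apply: minS.
- case=> finS sinkS minS; split=> //; first exact: right_left.
  move=> S' finS' sinkS' z /(minS _ finP sinkP).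
  exact: left_engel_sink_periodic.
Qed.
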